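(* Let $G$ be a connected graph with $\gamma(G)\ge 2$. For any graph $H$, $$\mu_t(G\circ H)=n(G)\,(n(H)-1)+\mu_t(G).$$
   Context: All graphs are finite, simple and undirected; $n(G)$ denotes the order of $G$ and $\gamma(G)$ its domination number. The lexicographic product $G\circ H$ has vertex set $V(G)\times V(H)$, with $(x,y)$ adjacent to $(x',y')$ iff $xx'\in E(G)$, or $x=x'$ and $yy'\in E(H)$. Let $F$ be a connected graph and $X\subseteq V(F)$. Two vertices $x,y\in V(F)$ are $X$-visible if there exists a shortest $x,y$-path in $F$ none of whose internal vertices belongs to $X$. $X$ is a total mutual-visibility set of $F$ if every two vertices of $F$ are $X$-visible (the empty set is allowed). $\mu_t(F)$ is the maximum cardinality of a total mutual-visibility set of $F$. *)

From mathcomp Require Import all_boot.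
From mathcomp Require Import boolp.
Set Implicit Arguments. Unset Strict Implicit. Unset Printing Implicit Defensive.

Section Graphs.
Variable T : finType.
Variable g : rel T.

Definition simple_graph := symmetric g /\ irreflexive g.

Definition connected_graph := forall x y : T, connect g x y.

Definition dominating (D : {set T}) : bool :=
  [forall v, (v \in D) || [exists u in D, g u v]].

Definition domination_number : nat :=
  \big[minn/#|T|]_(D : {set T} | dominating D) #|D|.

(* A walk from x is x :: p with path g x p; it ends at last x p;
   its length is size p. *)
Definition xy_walk (x y : T) (p : seq T) : bool :=
  path g x p && (last x p == y).

Definition shortest_xy_path (x y : T) (p : seq T) : Prop :=
  xy_walk x y p /\ forall q, xy_walk x y q -> size p <= size q.

(* internal vertices of the path x :: p (all but the two endpoints) *)
Definition internal_vertices (x : T) (p : seq T) : seq T := behead (belast x p).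

Definition X_visible (X : {set T}) (x y : T) : Prop :=
  exists p, shortest_xy_path x y p /\ forall z, z \in internal_vertices x p -> z \notin X.

Definition total_mutual_visibility_set (X : {set T}) : Prop :=
  forall x y : T, X_visible X x y.

Definition mu_t : nat :=
  \max_(X : {set T} | `[< total_mutual_visibility_set X >]) #|X|.

End Graphs.

Definition lexprod (T U : finType) (gG : rel T) (gH : rel U) : rel (T * U) :=
  fun a b => gG a.1 b.1 || ((a.1 == b.1) && gH a.2 b.2).

(* Walks of P = G o H project onto walks of G that are no longer (steps
   inside a G-fiber are dropped), and walks of G lift to walks of P of the
   same length with freely chosen H-coordinates.  Consequently, between two
   vertices of P in distinct G-fibers, shortest paths of P and of G
   correspond under these two maps.

   Lower bound: for a total mutual-visibility set X of G and a vertex h0 of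
   H, the complement of {(t, h0) | t not in X} is a total mutual-visibility
   set of P with n(G)(n(H) - 1) + |X| elements.  Vertices in distinct fibers
   see each other along a lifted shortest G-path running in the layer h0;
   vertices in a common fiber are adjacent or joined through (u, h0) for a
   neighbour u not in X, which exists since no single vertex dominates G.

   Upper bound: if S is a total mutual-visibility set of P, the vertices t
   whose whole fiber {t} x V(H) lies in S form a total mutual-visibility set
   of G (project a shortest path of P), and every other fiber misses a
   vertex of S, so |S| <= n(G)(n(H) - 1) + mu_t(G). *)

From HB Require Import structures.
From mathcomp Require Import all_boot.
From mathcomp Require Import boolp.
From mathcomp Require Import zify.

Set Implicit Arguments. Unset Strict Implicit. Unset Printing Implicit Defensive.

(* minn is associative and commutative, which lets the big-operator lemmas
   (bigD1) operate on the minimum defining the domination number. *)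
HB.instance Definition _ := SemiGroup.isComLaw.Build nat minn minnA minnC.

Section GraphFacts.
Variables (T : finType) (g : rel T).

Lemma shortest_path_exists (x y : T) :
  connect g x y -> exists p, shortest_xy_path g x y p.
Proof.
move=> /connectP [p pth ey].
have walk_len : exists n, `[< exists q, xy_walk g x y q /\ size q = n >].
  exists (size p); apply/asboolP; exists p.
  by rewrite /xy_walk pth -ey eqxx.
case: (ex_minnP walk_len) => n /asboolP [q [wq <-]] qmin.
exists q; split=> // q' wq'; apply: qmin; apply/asboolP; by exists q'.
Qed.

Lemma X_visible_refl (X : {set T}) (x : T) : X_visible g X x x.
Proof. by exists [::]; split=> //; split=> //; rewrite /xy_walk /= eqxx. Qed.

Lemma mu_t_ge (X : {set T}) :
  total_mutual_visibility_set g X -> #|X| <= mu_t g.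
Proof. by move=> tmvX; apply: leq_bigmax_cond; apply/asboolP. Qed.

(* In a connected graph the empty set is a total mutual-visibility set, so
   the maximum defining mu_t is attained. *)
Lemma mu_t_attained : connected_graph g ->
  exists2 X, total_mutual_visibility_set g X & #|X| = mu_t g.
Proof.
move=> conn.
have tmv0 : total_mutual_visibility_set g set0.
  move=> x y; have [p sp] := shortest_path_exists (conn x y).
  by exists p; split=> // z _; rewrite in_set0.
have ne : 0 < #|(fun X : {set T} => `[< total_mutual_visibility_set g X >])|.
  by apply/card_gt0P; exists set0; rewrite unfold_in; apply/asboolP.
have [X tmvX maxX] := eq_bigmax_cond (fun X : {set T} => #|X|) ne.
exists X; last by rewrite /mu_t maxX.
by move: tmvX; rewrite unfold_in => /asboolP.
Qed.

Lemma domination_number_le (D : {set T}) :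
  dominating g D -> domination_number g <= #|D|.
Proof. by move=> domD; rewrite /domination_number (bigD1 D) //= geq_minl. Qed.

(* If no single vertex dominates G, then every vertex x has a neighbour
   outside any total mutual-visibility set X: a shortest path from x to a
   vertex at distance 2 has its middle vertex outside X. *)
Lemma neighbor_outside_tmv (X : {set T}) (x : T) :
  2 <= domination_number g -> total_mutual_visibility_set g X ->
  exists2 u, g x u & u \notin X.
Proof.
move=> gamma2 tmvX.
have : ~~ dominating g [set x].
  apply/negP=> /domination_number_le; rewrite cards1; lia.
case/forallPn=> v /norP [nxv nadj]; rewrite in_set1 in nxv.
have nxv' : ~~ g x v.
  by apply/negP=> xv; case/negP: nadj; apply/existsP; exists x; rewrite in_set1 eqxx.
case: (tmvX x v) => p [[/andP [pth /eqP lp] _] inX].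
case: p pth lp inX => [|u [|w p]] /=.
- by move=> _ vx; rewrite vx eqxx in nxv.
- by move=> /andP [xu _] uv; rewrite -uv xu in nxv'.
move=> /andP [xu _] _ inX; exists u => //; apply: inX.
by rewrite /internal_vertices /= mem_head.
Qed.

End GraphFacts.

Section LexprodWalks.
Variables (T U : finType) (gG : rel T) (gH : rel U).
Notation gP := (lexprod gG gH).

Lemma path_of_fst_path (a : T * U) (s : seq (T * U)) :
  path gG a.1 (map fst s) -> path gP a s.
Proof.
elim: s a => [|b s IH] a //= /andP [ab ps].
by rewrite /lexprod ab IH.
Qed.

(* Projection of a P-walk onto G: drop the steps inside a fiber.  The
   projection is no longer, and has the same length only if no step was
   dropped, i.e. if it is the plain first-coordinate image. *)
Lemma project_walk (a : T * U) (q : seq (T * U)) : path gP a q ->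
  exists r, [/\ path gG a.1 r, last a.1 r = (last a q).1, size r <= size q
     & (size r = size q -> r = map fst q)].
Proof.
elim: q a => [|b q IH] a /=; first by exists [::].
case/andP=> ab pq; have [r [pr lr sr er]] := IH b pq.
case/orP: ab => [ab | /andP [/eqP fiber _]].
  exists (b.1 :: r); split=> //=; first by rewrite ab.
  by case=> /er ->.
exists r; rewrite fiber; split=> //; first exact: leqW.
by move=> eqs; move: sr; rewrite eqs ltnn.
Qed.

Lemma project_xy_walk (a b : T * U) (q : seq (T * U)) : xy_walk gP a b q ->
  exists r, [/\ xy_walk gG a.1 b.1 r, size r <= size q
     & (size r = size q -> r = map fst q)].
Proof.
case/andP=> pq /eqP lq; have [r [pr lr sr er]] := project_walk pq.
by exists r; split=> //; rewrite /xy_walk pr lr lq eqxx.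
Qed.

Fixpoint lift_walk (h0 he : U) (q : seq T) : seq (T * U) :=
  match q with
  | [::] => [::]
  | [:: t] => [:: (t, he)]
  | t :: q' => (t, h0) :: lift_walk h0 he q'
  end.

Lemma map_fst_lift_walk (h0 he : U) (q : seq T) :
  map fst (lift_walk h0 he q) = q.
Proof. by elim: q => [|t [|t' q] IH] //=; rewrite -IH. Qed.

Lemma size_lift_walk (h0 he : U) (q : seq T) : size (lift_walk h0 he q) = size q.
Proof. by rewrite -(size_map fst) map_fst_lift_walk. Qed.

Lemma last_lift_walk (h0 he : U) (a : T * U) (t : T) (q : seq T) :
  last a (lift_walk h0 he (t :: q)) = (last t q, he).
Proof. by elim: q a t => [|t' q IH] a t //=; rewrite IH. Qed.

Lemma lift_xy_walk (h h0 he : U) (x y : T) (q : seq T) : x != y ->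
  xy_walk gG x y q -> xy_walk gP (x, h) (y, he) (lift_walk h0 he q).
Proof.
case: q => [|t q] nxy /andP [pq /eqP lq]; first by rewrite -lq eqxx in nxy.
rewrite /xy_walk path_of_fst_path ?map_fst_lift_walk //=.
by rewrite last_lift_walk -lq.
Qed.

Lemma belast_lift_walk (h0 he : U) (a : T * U) (t : T) (q : seq T) :
  belast a (lift_walk h0 he (t :: q)) = a :: map (fun t => (t, h0)) (belast t q).
Proof. by elim: q a t => [|t' q IH] a t //=; rewrite IH. Qed.

Lemma internal_lift_walk (h0 he : U) (a : T * U) (x : T) (q : seq T) :
  internal_vertices a (lift_walk h0 he q)
  = map (fun t => (t, h0)) (internal_vertices x q).
Proof. by case: q => [|t q] //; rewrite /internal_vertices belast_lift_walk. Qed.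

Lemma internal_map_fst (a : T * U) (q : seq (T * U)) :
  internal_vertices a.1 (map fst q) = map fst (internal_vertices a q).
Proof. by rewrite /internal_vertices belast_map behead_map. Qed.

Lemma lift_shortest (h h0 he : U) (x y : T) (p : seq T) : x != y ->
  shortest_xy_path gG x y p ->
  shortest_xy_path gP (x, h) (y, he) (lift_walk h0 he p).
Proof.
move=> nxy [wp pmin]; split; first exact: lift_xy_walk.
move=> q /project_xy_walk [r [wr sr _]].
by rewrite size_lift_walk (leq_trans (pmin _ wr) sr).
Qed.

Lemma project_shortest (h he : U) (x y : T) (P : seq (T * U)) : x != y ->
  shortest_xy_path gP (x, h) (y, he) P -> shortest_xy_path gG x y (map fst P).
Proof.
move=> nxy [wP Pmin]; have [r [wr sr er]] := project_xy_walk wP.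
have sPr : size P <= size r.
  by rewrite -(size_lift_walk h he r); apply: Pmin; apply: lift_xy_walk.
rewrite -er; last by apply/eqP; rewrite eqn_leq sr sPr.
split=> // q wq; apply: leq_trans sr _.
by rewrite -(size_lift_walk h he q); apply: Pmin; apply: lift_xy_walk.
Qed.

End LexprodWalks.

Definition layer_restricted (T U : finType) (X : {set T}) (h0 : U) : {set T * U} :=
  ~: [set (t, h0) | t in ~: X].

Lemma mem_layer_restricted (T U : finType) (X : {set T}) (h0 : U) (t : T) :
  ((t, h0) \in layer_restricted X h0) = (t \in X).
Proof.
have inj : injective (fun t : T => (t, h0)) by move=> t1 t2 [].
by rewrite in_setC (mem_imset _ _ inj) in_setC negbK.
Qed.

Lemma card_layer_restricted (T U : finType) (X : {set T}) (h0 : U) :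
  #|layer_restricted X h0| = #|T| * (#|U| - 1) + #|X|.
Proof.
have cardI : #|[set (t, h0) | t in ~: X]| = #|~: X|.
  by rewrite card_imset // => t1 t2 [].
have cardTU : #|T| <= #|T| * #|U|.
  by rewrite leq_pmulr //; apply/card_gt0P; exists h0.
apply/eqP; rewrite -(eqn_add2l #|[set (t, h0) | t in ~: X]|) cardsC card_prod.
rewrite cardI addnCA [#|~: X| + _]addnC cardsC mulnBr muln1 subnK //.
Qed.

Section LowerBound.
Variables (T U : finType) (gG : rel T) (gH : rel U).
Notation gP := (lexprod gG gH).
Hypotheses (symG : symmetric gG) (gamma2 : 2 <= domination_number gG).
Variables (X : {set T}) (h0 : U).
Hypothesis tmvX : total_mutual_visibility_set gG X.

(* Two vertices of a common fiber are adjacent or at distance 2, through a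
   vertex (u, h0) with u a neighbour outside X. *)
Lemma visible_same_fiber (x : T) (a b : U) :
  X_visible gP (layer_restricted X h0) (x, a) (x, b).
Proof.
have [<-|nab] := eqVneq a b; first exact: X_visible_refl.
have nxab : (x, a) != (x, b) by rewrite xpair_eqE eqxx.
have [adj|nadj] := boolP (gP (x, a) (x, b)).
  exists [:: (x, b)]; split=> //; split; first by rewrite /xy_walk /= adj eqxx.
  by case=> [|c q] //=; rewrite /xy_walk /= (negbTE nxab).
have [u xu uX] := neighbor_outside_tmv x gamma2 tmvX.
exists [:: (u, h0); (x, b)]; split.
  split; first by rewrite /xy_walk /= /lexprod /= xu symG xu !eqxx.
  case=> [|c [|d q]] //; rewrite /xy_walk /=.
  - by rewrite (negbTE nxab).
  - by case/andP=> /andP [ac _] /eqP cE; rewrite -cE ac in nadj.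
move=> z; rewrite /internal_vertices /= inE => /eqP ->.
by rewrite mem_layer_restricted.
Qed.

(* Vertices in distinct fibers see each other along the lift, in layer h0,
   of a shortest path of G avoiding X internally. *)
Lemma visible_distinct_fibers (x y : T) (a b : U) : x != y ->
  X_visible gP (layer_restricted X h0) (x, a) (y, b).
Proof.
move=> nxy; have [p [sp inX]] := tmvX x y.
exists (lift_walk h0 b p); split; first exact: lift_shortest.
move=> z; rewrite (internal_lift_walk _ _ _ x) => /mapP [t it ->].
by rewrite mem_layer_restricted inX.
Qed.

Lemma tmv_layer_restricted :
  total_mutual_visibility_set gP (layer_restricted X h0).
Proof.
move=> [x a] [y b]; have [<-|nxy] := eqVneq x y.
  exact: visible_same_fiber.
exact: visible_distinct_fibers.
Qed.

End LowerBound.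

Section UpperBound.
Variables (T U : finType) (gG : rel T) (gH : rel U).
Notation gP := (lexprod gG gH).

Definition full_fibers (S : {set T * U}) : {set T} :=
  [set t | [forall k, (t, k) \in S]].

(* If S is a total mutual-visibility set of P, projecting a shortest path
   of P from (x, h) to (y, h) whose internal vertices avoid S gives a
   shortest path of G whose internal vertices avoid the full fibers of S. *)
Lemma tmv_full_fibers (h : U) (S : {set T * U}) :
  total_mutual_visibility_set gP S ->
  total_mutual_visibility_set gG (full_fibers S).
Proof.
move=> tmvS x y; have [<-|nxy] := eqVneq x y; first exact: X_visible_refl.
have [P [sP inS]] := tmvS (x, h) (y, h).
exists (map fst P); split; first exact: project_shortest sP.
rewrite -[x]/((x, h).1) internal_map_fst => z /mapP [w /inS wS ->].
apply/negP; rewrite inE => /forallP /(_ w.2).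
by rewrite -surjective_pairing; apply/negP.
Qed.

Lemma card_fiber_le (S : {set T * U}) (t : T) :
  #|[set k | (t, k) \in S]| <= (#|U| - 1) + (t \in full_fibers S).
Proof.
have [_|] := boolP (t \in full_fibers S).
  apply: leq_trans (max_card _) _; rewrite addn1 subn1; exact: leqSpred.
rewrite inE => /forallPn [k kS].
have U0 : 0 < #|U| by apply/card_gt0P; exists k.
rewrite addn0 subn1 -ltnS prednK // -cardsT; apply: proper_card.
rewrite properT; apply/eqP=> fiberT; have := in_setT k.
by rewrite -fiberT inE; apply/negP.
Qed.

Lemma card_le_full_fibers (S : {set T * U}) :
  #|S| <= #|T| * (#|U| - 1) + #|full_fibers S|.
Proof.
have -> : #|S| = \sum_t #|[set k | (t, k) \in S]|.
  under [RHS]eq_bigr do rewrite -sum1dep_card.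
  rewrite -sum1_card pair_big_dep /=; by apply: eq_bigl => -[t k].
apply: (@leq_trans (\sum_t ((#|U| - 1) + (t \in full_fibers S)))).
  by apply: leq_sum => t _; apply: card_fiber_le.
rewrite big_split /= sum_nat_const leq_add2l -sum1_card [X in _ <= X]big_mkcond.
by apply: leq_sum => t _; case: (t \in _).
Qed.

End UpperBound.

Theorem theorem4p3 (T U : finType) (gG : rel T) (gH : rel U) :
  simple_graph gG -> simple_graph gH ->
  connected_graph gG -> 2 <= domination_number gG ->
  0 < #|U| ->
  mu_t (lexprod gG gH) = #|T| * (#|U| - 1) + mu_t gG.
Proof.
move=> [symG _] _ connG gamma2 /card_gt0P [h0 _].
have [X tmvX cardX] := mu_t_attained connG.
apply/eqP; rewrite eqn_leq; apply/andP; split.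
  apply/bigmax_leqP => S /asboolP tmvS.
  apply: leq_trans (card_le_full_fibers S) _; rewrite leq_add2l.
  exact/mu_t_ge/(tmv_full_fibers h0 tmvS).
rewrite -cardX -(card_layer_restricted X h0).
exact/mu_t_ge/(tmv_layer_restricted gH symG gamma2 h0 tmvX).
Qed.
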